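(* Let $\vec{\alpha}=\langle\alpha_s:s\in[\mathbb{N}]^{<\infty}\rangle$ be a sequence of nonstandard hypernatural numbers and let $n\in\mathbb{N}$. For every $A\subseteq[\mathbb{N}]^n$ and every $\vec{\alpha}$-tree $T$ there exists an $\vec{\alpha}$-tree $S\subseteq T$ with $st(S)=st(T)$ such that either $S(n)\subseteq A$ or $S(n)\cap A=\emptyset$.
   Context: Setting (Alpha-Theory of Benci–Di Nasso): ZFC together with a new symbol $\alpha$ satisfying: ($\alpha$1) every sequence $\varphi=\langle\varphi_i:i\in\mathbb{N}\rangle$ has a unique ideal value $\varphi[\alpha]$; ($\alpha$2) if $\varphi[\alpha]=\psi[\alpha]$ and $f\circ\varphi$, $f\circ\psi$ make sense then $(f\circ\varphi)[\alpha]=(f\circ\psi)[\alpha]$; ($\alpha$3) constant real sequences $r$ have ideal value $r$, and $\langle i\rangle$ has ideal value $\alpha\notin\mathbb{N}$; ($\alpha$4) if $\vartheta_i=\{\varphi_i,\psi_i\}$ then $\vartheta[\alpha]=\{\varphi[\alpha],\psi[\alpha]\}$; ($\alpha$5) the constant sequence $\emptyset$ has ideal value $\emptyset$, and for nonempty $\psi_i$, $\psi[\alpha]=\{\vartheta[\alpha]:\vartheta_i\in\psi_i\ \forall i\}$. ${}^*A$ is the ideal value of the constant sequence $A$; elements of ${}^*\mathbb{N}\setminus\mathbb{N}$ are nonstandard hypernatural numbers. $[X]^n$, $[X]^{<\infty}$, $[X]^\infty$: $n$-element, finite, infinite subsets of $X\subseteq\mathbb{N}$. For finite $s$, $s\sqsubseteq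 X$ means $s=\{j\in X:j\le i\}$ for some $i$. A tree on $\mathbb{N}$ is a nonempty $T\subseteq[\mathbb{N}]^{<\infty}$ closed under $\sqsubseteq$-initial segments; $T(n)=\{s\in T:|s|=n\}$; stem $st(T)$ = $\sqsubseteq$-maximal $s\in T$ comparable with all elements of $T$; $T/s=\{t\in T:s\sqsubseteq t\}$. An $\vec{\alpha}$-tree is a tree $T$ with a stem, $T/st(T)\neq\emptyset$, and $s\cup\{\alpha_s\}\in{}^*T$ for all $s\in T/st(T)$. *)

From HB Require Import structures.
From mathcomp Require Import all_boot finmap.
Set Implicit Arguments. Unset Strict Implicit. Unset Printing Implicit Defensive.
Local Open Scope fset_scope.

Definition init_seg (s X : {fset nat}) : Prop :=
  exists i : nat, s = [fset j in X | j < i].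

Definition is_tree (T : {fset nat} -> Prop) : Prop :=
  (exists t, T t) /\ (forall s t, T t -> init_seg s t -> T s).

Definition comparable_all (T : {fset nat} -> Prop) (s : {fset nat}) : Prop :=
  forall t, T t -> init_seg s t \/ init_seg t s.

Definition is_stem (T : {fset nat} -> Prop) (s : {fset nat}) : Prop :=
  [/\ T s, comparable_all T s &
      forall s', T s' -> comparable_all T s' -> init_seg s s' -> s' = s].

Definition nonprincipal_ultrafilter (U : (nat -> Prop) -> Prop) : Prop :=
  [/\ U (fun _ => True) /\ ~ U (fun _ => False),
      (forall P Q : nat -> Prop, U P -> (forall i, P i -> Q i) -> U Q),
      (forall P Q : nat -> Prop, U P -> U Q -> U (fun i => P i /\ Q i)),
      (forall P : nat -> Prop, U P \/ U (fun i => ~ P i)) &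
      (forall m : nat, ~ U (fun i => i = m))].

(* the hypernatural [f]_U is nonstandard *)
Definition nonstandard (U : (nat -> Prop) -> Prop) (f : nat -> nat) : Prop :=
  forall m : nat, ~ U (fun i => f i = m).

(* the ideal value of phi belongs to *T  (Łoś) *)
Definition star_mem (U : (nat -> Prop) -> Prop) (phi : nat -> {fset nat})
  (T : {fset nat} -> Prop) : Prop := U (fun i => T (phi i)).

(* alpha-tree, where alpha_s is the hypernatural [alpha s]_U *)
Definition alpha_tree (U : (nat -> Prop) -> Prop) (alpha : {fset nat} -> nat -> nat)
  (T : {fset nat} -> Prop) : Prop :=
  is_tree T /\
  exists r, [/\ is_stem T r, (exists t, T t /\ init_seg r t) &
    forall s, T s -> init_seg r s ->
      star_mem U (fun i => s `|` [fset alpha s i]) T].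

(* Call a node t of size at most n decided when the branch
   t ∪ {α_t, α_{t∪{α_t}}, ...} obtained by adding n - |t| points lies in *A.
   As U is an ultrafilter, U-almost every α-successor of t is decided exactly
   when t is.  Hence the nodes of T whose initial segments between the stem r
   and level n are all decided iff r is form an α-tree with stem r.  If
   |r| <= n, its level n lies inside A or outside A according to whether r is
   decided; if |r| > n, its level n has at most one element. *)
From mathcomp Require Import all_boot finmap.
From Stdlib Require Import Classical.
Set Implicit Arguments.
Local Open Scope fset_scope.

Lemma fset_nat_bounded (t : {fset nat}) : exists b, {in t, forall j, j < b}.
Proof.
exists (\max_(j <- t) j).+1 => j jt.
by rewrite ltnS; apply: (leq_bigmax_seq j jt).
Qed.

Lemma init_seg_subset p t : init_seg p t -> p `<=` t.
Proof. by move=> [i ->]; apply/fsubsetP => x; rewrite !inE => /andP[]. Qed.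

Lemma init_seg_refl t : init_seg t t.
Proof.
have [b tb] := fset_nat_bounded t; exists b; apply/fsetP => x; rewrite !inE.
by case xt: (x \in t); rewrite //= tb.
Qed.

Lemma init_seg_trans p s t : init_seg p s -> init_seg s t -> init_seg p t.
Proof.
move=> [i ->] [i' ->]; exists (minn i i'); apply/fsetP => x.
by rewrite !inE leq_min -andbA [(x < i') && _]andbC.
Qed.

Lemma init_seg_anti p q : init_seg p q -> init_seg q p -> p = q.
Proof.
move=> /init_seg_subset pq /init_seg_subset/fsubset_leq_card qp.
by apply/eqP; rewrite eqEfcard pq.
Qed.

Lemma init_seg_card_inj p q t :
  init_seg p t -> init_seg q t -> #|` p| = #|` q| -> p = q.
Proof.
move=> [i ->] [j ->] pq; apply/eqP.
have sub k l : k <= l -> [fset x in t | x < k] `<=` [fset x in t | x < l].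
  by move=> kl; apply/fsubsetP => x; rewrite !inE => /andP[-> /leq_trans->].
case: (leqP i j) => [/sub ij | /ltnW/sub ji].
  by rewrite eqEfcard ij pq leqnn.
by rewrite eq_sym eqEfcard ji pq leqnn.
Qed.

Lemma cardfsU1_max (s : {fset nat}) a :
  {in s, forall j, j < a} -> #|` s `|` [fset a]| = (#|` s|).+1.
Proof.
move=> sa; have a_notin : a \notin s by apply/negP => /sa; rewrite ltnn.
by rewrite fsetUC cardfsU1 a_notin.
Qed.

Lemma init_seg_fsetU1_maxP p (s : {fset nat}) a : {in s, forall j, j < a} ->
  init_seg p (s `|` [fset a]) -> p = s `|` [fset a] \/ init_seg p s.
Proof.
move=> sa [i ->]; case: (ltnP a i) => [ai|ia].
  left; apply/fsetP => x; rewrite !inE andb_orl.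
  by case: eqP => [->|_]; rewrite ?ai ?orbT ?orbF // andb_idr // => /sa/ltn_trans->.
right; exists i; apply/fsetP => x; rewrite !inE andb_orl.
by case: eqP => [->|_]; rewrite ?orbF //= ltnNge ia andbF orbF.
Qed.

Section Ultrafilter.
Variable U : (nat -> Prop) -> Prop.
Hypothesis HU : nonprincipal_ultrafilter U.

Lemma U_mono {P Q : nat -> Prop} : U P -> (forall i, P i -> Q i) -> U Q.
Proof. by case: HU => _ mono _ _ _; apply: mono. Qed.

Lemma U_and {P Q : nat -> Prop} : U P -> U Q -> U (fun i => P i /\ Q i).
Proof. by case: HU => _ _ and _ _; apply: and. Qed.

Lemma U_True : U (fun _ => True).
Proof. by case: HU => [[]]. Qed.

Lemma U_not {P : nat -> Prop} : ~ U P -> U (fun i => ~ P i).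
Proof. by case: HU => _ _ _ dec _ nUP; case: (dec P). Qed.

Lemma U_ex {P : nat -> Prop} : U P -> exists i, P i.
Proof.
move=> UP; apply: NNPP => noP; have [[_ nUF] _ _ _ _] := HU.
by apply: nUF; apply: (U_mono UP) => i Pi; apply: noP; exists i.
Qed.

Lemma U_iff_self (P : nat -> Prop) : U (fun i => P i <-> U P).
Proof.
case: (classic (U P)) => [UP | nUP].
  by apply: (U_mono UP) => i; tauto.
by apply: (U_mono (U_not nUP)) => i; tauto.
Qed.

Lemma nonstandard_ge f b : nonstandard U f -> U (fun i => b <= f i).
Proof.
move=> fns; elim: b => [|b IH]; first by apply: (U_mono U_True).
apply: (U_mono (U_and IH (U_not (fns b)))) => i [bf fb].
by rewrite ltn_neqAle bf andbT; apply/eqP => E; apply: fb.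
Qed.

Lemma nonstandard_above f (s : {fset nat}) :
  nonstandard U f -> U (fun i => {in s, forall j, j < f i}).
Proof.
move=> fns; have [b sb] := fset_nat_bounded s.
by apply: (U_mono (nonstandard_ge b fns)) => i bf j /sb /leq_trans; apply.
Qed.

End Ultrafilter.

Section Homogeneous.
Variables (U : (nat -> Prop) -> Prop) (alpha : {fset nat} -> nat -> nat).
Variables (n : nat) (A T : {fset nat} -> Prop) (r : {fset nat}).
Hypothesis HU : nonprincipal_ultrafilter U.
Hypothesis alpha_ns : forall s, nonstandard U (alpha s).
Hypothesis T_tree : is_tree T.
Hypothesis T_stem : is_stem T r.
Hypothesis T_succ : forall s, T s -> init_seg r s ->
  star_mem U (fun i => s `|` [fset alpha s i]) T.

Let succ s i := s `|` [fset alpha s i].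

(* [alpha_ext_mem k t]: the hyperfinite set t ∪ {α_t, α_{t∪{α_t}}, ...}
   with k points added lies in *A. *)
Fixpoint alpha_ext_mem (k : nat) (t : {fset nat}) : Prop :=
  if k is k'.+1 then U (fun i => alpha_ext_mem k' (succ t i)) else A t.

Definition decided (t : {fset nat}) : Prop := alpha_ext_mem (n - #|` t|) t.

Lemma decided_succ s : #|` s| < n ->
  U (fun i => decided (succ s i) <-> decided s).
Proof.
move=> sn; rewrite /decided -(subnSK sn) /=.
pose P i := alpha_ext_mem (n - (#|` s|).+1) (succ s i).
apply: (U_mono HU (U_and HU (U_iff_self HU P) (nonstandard_above HU s (@alpha_ns s)))).
by move=> i [dec /cardfsU1_max ->].
Qed.

Definition homog_sub (t : {fset nat}) : Prop :=
  T t /\ forall p, init_seg p t -> init_seg r p -> #|` p| <= n ->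
    (decided p <-> decided r).

Lemma homog_sub_stem_mem : homog_sub r.
Proof.
have [Tr _ _] := T_stem.
by split=> // p /init_seg_anti pr /pr ->.
Qed.

Lemma homog_sub_tree : is_tree homog_sub.
Proof.
split; first by exists r; exact: homog_sub_stem_mem.
move=> s t [Tt dect] st; split; first exact: T_tree.2 Tt st.
by move=> p ps; apply: dect; apply: init_seg_trans ps st.
Qed.

Lemma homog_sub_succ s : homog_sub s -> init_seg r s ->
  U (fun i => homog_sub (succ s i)).
Proof.
move=> [Ts decs] rs.
have above := nonstandard_above HU s (@alpha_ns s).
have dec_succ : U (fun i => #|` s| < n -> (decided (succ s i) <-> decided s)).
  case: (ltnP #|` s| n) => [sn | ns]; last by apply: (U_mono HU (U_True HU)).
  by apply: (U_mono HU (decided_succ s sn)) => i dec _.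
apply: (U_mono HU (U_and HU (T_succ Ts rs) (U_and HU above dec_succ))).
move=> i [Tsi [sa dec]]; split=> // p psi rp pn.
move: pn; case: (init_seg_fsetU1_maxP sa psi) => [-> | ps pn]; last exact: decs.
rewrite cardfsU1_max // => sn.
by rewrite dec //; apply: decs => //; [apply: init_seg_refl | apply: ltnW].
Qed.

Lemma homog_sub_stem : is_stem homog_sub r.
Proof.
have [_ comp _] := T_stem.
split; [exact: homog_sub_stem_mem | by move=> t [/comp] |].
move=> s' Ss' comp' rs'.
have [i [Ssucc sa]] := U_ex HU (U_and HU
  (homog_sub_succ homog_sub_stem_mem (init_seg_refl r))
  (nonstandard_above HU s' (@alpha_ns r))).
have a_notin : alpha r i \notin s' by apply/negP => /sa; rewrite ltnn.
have ra : {in r, forall j, j < alpha r i}.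
  by move=> j /(fsubsetP (init_seg_subset rs')) /sa.
case: (comp' _ Ssucc) => [s'_succ | /init_seg_subset/fsubsetP/(_ (alpha r i))].
  case: (init_seg_fsetU1_maxP ra s'_succ) => [s'E | s'r]; last exact: init_seg_anti.
  by move: a_notin; rewrite s'E !inE eqxx orbT.
by rewrite !inE eqxx orbT (negbTE a_notin) => /(_ isT).
Qed.

Lemma homog_sub_alpha_tree : alpha_tree U alpha homog_sub.
Proof.
split; first exact: homog_sub_tree.
exists r; split; first exact: homog_sub_stem.
  by exists r; split; [exact: homog_sub_stem_mem | exact: init_seg_refl].
exact: homog_sub_succ.
Qed.

Lemma homog_sub_level_iff s s' : homog_sub s -> homog_sub s' ->
  #|` s| = n -> #|` s'| = n -> (A s <-> A s').
Proof.
have [_ comp _] := T_stem.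
case: (leqP #|` r| n) => [rn | nr].
  suff A_dec t : homog_sub t -> #|` t| = n -> (A t <-> decided r).
    by move=> Ss Ss' sn s'n; have := A_dec s Ss sn; have := A_dec s' Ss' s'n; tauto.
  move=> [Tt dect] tn; have rt : init_seg r t.
    case: (comp t Tt) => // tr; suff -> : r = t by exact: init_seg_refl.
    by apply/eqP; rewrite eq_sym eqEfcard (init_seg_subset tr) tn rn.
  by have := dect t (init_seg_refl t) rt (eq_leq tn); rewrite /decided tn subnn.
suff sr t : homog_sub t -> #|` t| = n -> init_seg t r.
  move=> Ss Ss' sn s'n.
  by rewrite (init_seg_card_inj (sr s Ss sn) (sr s' Ss' s'n) (etrans sn (esym s'n))).
move=> [Tt _] tn; case: (comp t Tt) => // /init_seg_subset/fsubset_leq_card.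
by rewrite tn leqNgt nr.
Qed.

End Homogeneous.

Theorem mainTheorem14 (U : (nat -> Prop) -> Prop)
  (alpha : {fset nat} -> nat -> nat) (n : nat)
  (A : {fset nat} -> Prop) (T : {fset nat} -> Prop) :
  nonprincipal_ultrafilter U ->
  (forall s, nonstandard U (alpha s)) ->
  (forall s, A s -> #|` s| = n) ->
  alpha_tree U alpha T ->
  exists S : {fset nat} -> Prop,
    [/\ alpha_tree U alpha S,
        (forall s, S s -> T s),
        (exists r, is_stem T r /\ is_stem S r) &
        (forall s, S s -> #|` s| = n -> A s) \/
        (forall s, S s -> #|` s| = n -> ~ A s)].
Proof.
move=> HU alpha_ns _ [T_tree [r [T_stem _ T_succ]]].
pose S := homog_sub U alpha n A T r.
exists S; split.
- exact: homog_sub_alpha_tree.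
- by move=> s [].
- by exists r; split; last exact: homog_sub_stem.
case: (classic (exists s0, [/\ S s0, #|` s0| = n & A s0])) => [[s0 [Ss0 s0n As0]] | noA].
  by left=> s Ss sn; apply/(homog_sub_level_iff T_stem Ss Ss0 sn s0n).
by right=> s Ss sn As; apply: noA; exists s.
Qed.
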